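(* Consider the planar system \[ \frac{dx}{dt}= x\Big(1-\frac{x}{\gamma}\Big)-\frac{xy}{(1+\alpha\xi)(\omega x^2+1)+x},\qquad \frac{dy}{dt}= \frac{\delta\big(x+\xi(\omega x^2+1)\big)y}{(1+\alpha\xi)(\omega x^2+1)+x}-my-\epsilon y^2, \] with positive parameters $\gamma,\alpha,\xi,\omega,\delta,m,\epsilon$ satisfying $\delta>m$. The equilibrium $E_2=\Big(0,\frac{\delta\xi-m(1+\alpha\xi)}{\epsilon(1+\alpha\xi)}\Big)$ lies in the positive $xy$-quadrant and is a stable node if $\delta\xi-m(1+\alpha\xi)>0$ and $\delta\xi-m(1+\alpha\xi)>\epsilon(1+\alpha\xi)^2$; it lies in the positive $xy$-quadrant and is a saddle if $\delta\xi-m(1+\alpha\xi)>0$ and $\delta\xi-m(1+\alpha\xi)<\epsilon(1+\alpha\xi)^2$.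
   Context: $x$ and $y$ are prey (pest) and predator densities; $\alpha$ and $\xi$ are the quality and quantity of additional food for predators, $\epsilon$ is the predator intra-specific competition coefficient. Stability type refers to the linearization (Jacobian) at the equilibrium. *)

From HB Require Import structures.
From mathcomp Require Import all_boot all_order all_algebra.
From mathcomp Require Import all_classical all_reals all_analysis.
Set Implicit Arguments. Unset Strict Implicit. Unset Printing Implicit Defensive.
Import Order.TTheory GRing.Theory Num.Theory.
Local Open Scope ring_scope.

Section Model.
Variables (R : realType) (gamma alpha xi omega delta m eps : R).

Definition den (x : R) : R := (1 + alpha * xi) * (omega * x ^+ 2 + 1) + x.

Definition fx (x y : R) : R := x * (1 - x / gamma) - x * y / den x.

Definition fy (x y : R) : R :=
  delta * (x + xi * (omega * x ^+ 2 + 1)) * y / den x - m * y - eps * y ^+ 2.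

Definition vf_jacobian (x0 y0 : R) : 'M[R]_2 :=
  \matrix_(i < 2, j < 2)
    let f := if i == 0 then fx else fy in
    if j == 0 then derive1 (fun t => f t y0) x0 else derive1 (fun t => f x0 t) y0.

Definition E2y : R := (delta * xi - m * (1 + alpha * xi)) / (eps * (1 + alpha * xi)).
End Model.

Definition stable_node (R : realType) (J : 'M[R]_2) : Prop :=
  exists l1 l2 : R, l1 < 0 /\ l2 < 0 /\
    char_poly J = ('X - l1%:P) * ('X - l2%:P).

Definition saddle (R : realType) (J : 'M[R]_2) : Prop :=
  exists l1 l2 : R, l1 < 0 /\ 0 < l2 /\
    char_poly J = ('X - l1%:P) * ('X - l2%:P).

From HB Require Import structures.
From mathcomp Require Import all_boot all_order all_algebra.
From mathcomp Require Import all_classical all_reals all_analysis.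
From mathcomp Require Import ring.
Import Order.TTheory GRing.Theory Num.Theory.
Local Open Scope ring_scope.

(* Both equations are of Kolmogorov form, fx = x * (prey per-capita rate) and
   fy = y * (predator per-capita rate).  On the prey-free axis x = 0 this makes
   dfx/dy vanish, so the Jacobian at E2 is triangular; its diagonal entries are
   the prey rate 1 - y2 / (1 + alpha xi) and, since the predator rate vanishes
   at E2, y2 times the y-derivative of that rate, i.e. - eps y2.  Their signs
   are decided by comparing delta xi - m (1 + alpha xi) with 0 and with
   eps (1 + alpha xi)^2. *)

Lemma derive1_mul_id (R : realType) (g : R -> R) (y : R) :
  derivable g y 1 -> derive1 (fun t => t * g t) y = g y + y * derive1 g y.
Proof.
move=> dg; rewrite !derive1E (deriveM (@derivable_id _ _ y 1) dg) derive_id.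
by rewrite addrC scaler1.
Qed.

Lemma char_poly_trig2 (R : comNzRingType) (J : 'M[R]_2) :
  J 0 1 = 0 -> char_poly J = ('X - (J 0 0)%:P) * ('X - (J 1 1)%:P).
Proof.
move=> J01; rewrite char_poly_trig.
  by rewrite !big_ord_recl big_ord0 mulr1 [lift _ _](_ : _ = 1) //; apply/val_inj.
apply/is_trig_mxP => -[[|[|//]] ?] -[[|[|//]] ?] //= _.
by rewrite -J01; congr (J _ _); apply/val_inj.
Qed.

Lemma stable_node_trig2 (R : realType) (J : 'M[R]_2) :
  J 0 1 = 0 -> J 0 0 < 0 -> J 1 1 < 0 -> stable_node J.
Proof. by move=> J01 J00 J11; exists (J 0 0), (J 1 1); rewrite char_poly_trig2. Qed.

Lemma saddle_trig2 (R : realType) (J : 'M[R]_2) :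
  J 0 1 = 0 -> 0 < J 0 0 -> J 1 1 < 0 -> saddle J.
Proof.
by move=> J01 J00 J11; exists (J 1 1), (J 0 0); rewrite char_poly_trig2 // mulrC.
Qed.

Section PreyFreeAxis.
Variables (R : realType) (gamma alpha xi omega delta m eps : R).

Local Notation A := (1 + alpha * xi).
Local Notation D := (delta * xi - m * A).
Local Notation y2 := (E2y alpha xi delta m eps).
Local Notation J := (vf_jacobian gamma alpha xi omega delta m eps).

Definition prey_growth_rate (x y : R) : R :=
  1 - x / gamma - y / den alpha xi omega x.

Definition predator_growth_rate (x y : R) : R :=
  delta * (x + xi * (omega * x ^+ 2 + 1)) / den alpha xi omega x - m - eps * y.

Lemma fxE x y : fx gamma alpha xi omega x y = x * prey_growth_rate x y.
Proof. by rewrite /fx /prey_growth_rate; ring. Qed.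

Lemma fyE x y : fy alpha xi omega delta m eps x y = y * predator_growth_rate x y.
Proof. by rewrite /fy /predator_growth_rate; ring. Qed.

Lemma den0 : den alpha xi omega 0 = A.
Proof. by rewrite /den expr0n /= mulr0 add0r mulr1 addr0. Qed.

Lemma prey_growth_rate_derivable x y :
  den alpha xi omega x != 0 -> derivable (prey_growth_rate^~ y) x 1.
Proof.
move=> den_neq0; apply: derivableB; first exact: ex_derive.
by apply: derivableM; [exact: ex_derive | apply: derivableV => //; exact: ex_derive].
Qed.

Lemma derive1_predator_growth_rate x y : derive1 (predator_growth_rate x) y = - eps.
Proof. by rewrite derive1E derive_val add0r mul1r scaler1. Qed.

Lemma jacobian_axis01 y : J 0 y 0 1 = 0.
Proof.
rewrite /vf_jacobian mxE /=.
have -> : (fun t => fx gamma alpha xi omega 0 t) = cst 0.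
  by apply/funext => t; rewrite fxE mul0r.
exact: derive1_cst.
Qed.

Lemma jacobian_axis00 y : A != 0 -> J 0 y 0 0 = 1 - y / A.
Proof.
move=> A_neq0; rewrite /vf_jacobian mxE /=.
under eq_fun do rewrite fxE.
rewrite derive1_mul_id ?mul0r ?addr0; last by apply: prey_growth_rate_derivable; rewrite den0.
by rewrite /prey_growth_rate den0 mul0r subr0.
Qed.

Lemma jacobian11 x y : J x y 1 1 = predator_growth_rate x y - eps * y.
Proof.
rewrite /vf_jacobian mxE /=.
under eq_fun do rewrite fyE.
rewrite derive1_mul_id ?derive1_predator_growth_rate; last exact: ex_derive.
by rewrite mulrN mulrC.
Qed.

Hypotheses (A_gt0 : 0 < A) (eps_gt0 : 0 < eps).

Let A_neq0 : A != 0. Proof. exact: lt0r_neq0. Qed.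
Let eps_neq0 : eps != 0. Proof. exact: lt0r_neq0. Qed.

Lemma predator_growth_rate_E2 : predator_growth_rate 0 y2 = 0.
Proof.
rewrite /predator_growth_rate /E2y den0.
by field; rewrite eps_neq0 A_neq0.
Qed.

Lemma E2_equilibrium :
  fx gamma alpha xi omega 0 y2 = 0 /\ fy alpha xi omega delta m eps 0 y2 = 0.
Proof. by rewrite fxE fyE predator_growth_rate_E2 mul0r mulr0. Qed.

Lemma E2y_gt0 : 0 < D -> 0 < y2.
Proof. by move=> D_gt0; rewrite /E2y divr_gt0 // mulr_gt0. Qed.

Lemma jacobian_E2_00 : J 0 y2 0 0 = 1 - D / (eps * A ^+ 2).
Proof. by rewrite jacobian_axis00 // /E2y; field; rewrite eps_neq0 A_neq0. Qed.

Lemma jacobian_E2_00_lt0 : eps * A ^+ 2 < D -> J 0 y2 0 0 < 0.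
Proof.
by move=> hD; rewrite jacobian_E2_00 subr_lt0 ltr_pdivlMr ?mul1r // mulr_gt0 ?exprn_gt0.
Qed.

Lemma jacobian_E2_00_gt0 : D < eps * A ^+ 2 -> 0 < J 0 y2 0 0.
Proof.
by move=> hD; rewrite jacobian_E2_00 subr_gt0 ltr_pdivrMr ?mul1r // mulr_gt0 ?exprn_gt0.
Qed.

Lemma jacobian_E2_11_lt0 : 0 < D -> J 0 y2 1 1 < 0.
Proof.
move=> /E2y_gt0 y2_gt0.
by rewrite jacobian11 predator_growth_rate_E2 sub0r oppr_lt0 mulr_gt0.
Qed.

End PreyFreeAxis.

Theorem mainTheorem4 (R : realType) (gamma alpha xi omega delta m eps : R) :
  0 < gamma -> 0 < alpha -> 0 < xi -> 0 < omega -> 0 < delta -> 0 < m ->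
  0 < eps -> m < delta ->
  let y2 := E2y alpha xi delta m eps in
  let J := vf_jacobian gamma alpha xi omega delta m eps 0 y2 in
  (* E2 is an equilibrium *)
  (fx gamma alpha xi omega 0 y2 = 0 /\ fy alpha xi omega delta m eps 0 y2 = 0) /\
  (0 < delta * xi - m * (1 + alpha * xi) ->
   delta * xi - m * (1 + alpha * xi) > eps * (1 + alpha * xi) ^+ 2 ->
   0 < y2 /\ stable_node J) /\
  (0 < delta * xi - m * (1 + alpha * xi) ->
   delta * xi - m * (1 + alpha * xi) < eps * (1 + alpha * xi) ^+ 2 ->
   0 < y2 /\ saddle J).
Proof.
move=> _ alpha_gt0 xi_gt0 _ _ _ eps_gt0 _ y2 J.
have A_gt0 : 0 < 1 + alpha * xi by rewrite addr_gt0 ?mulr_gt0.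
split; first exact: E2_equilibrium.
split=> D_gt0 hD; split; try exact: E2y_gt0.
- apply: stable_node_trig2; first exact: jacobian_axis01.
  + exact: jacobian_E2_00_lt0.
  + exact: jacobian_E2_11_lt0.
- apply: saddle_trig2; first exact: jacobian_axis01.
  + exact: jacobian_E2_00_gt0.
  + exact: jacobian_E2_11_lt0.
Qed.
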